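(* Let $A=KQ/I$ be a finite-dimensional gentle algebra and let $B$ be a band for $A$ with an auto-reaching, i.e. there are a finite substring $L$ on top of $B^\infty$ and a finite substring $L'$ at the bottom of $B^\infty$ which are equal as strings (either $L'=L$ or $L'=L^{-1}$ as walks). Then $\ell(L)\le\ell(B)-2$.
   Context: Letters are arrows $\alpha\in Q_1$ (direct letters, traversed from $s(\alpha)$ to $t(\alpha)$) and formal inverses $\alpha^{-1}$ (inverse letters, traversed from $t(\alpha)$ to $s(\alpha)$). A string is a reduced walk (no letter followed by its own inverse) in $Q$ avoiding the relations of $I$ and their inverses; a string is identified with its inverse walk; $\ell$ denotes length (number of letters). A band is a closed walk $B=b_1\cdots b_m$ ($m\ge1$) all of whose powers are strings, considered up to rotation and inversion; $\ell(B)=m$. $B^\infty$ is the bi-infinite walk $\cdots b_1\cdots b_m b_1\cdots b_m\cdots$. A finite consecutive subwalk $L$ of $B^\infty$ (possibly of length $0$) is on top of $B^\infty$ if the letter immediately before $L$ is an inverse letter and the letter immediately after $L$ is a direct letter (i.e. the adjacent arrows point away from $L$); it is at the bottom if the letter immediately before is direct and the letter immediately after is inverse (the adjacent arrows point into $L$). *)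

From mathcomp Require Import all_boot.
Set Implicit Arguments. Unset Strict Implicit. Unset Printing Implicit Defensive.

Section Gentle.
Variables (V E : finType) (s t : E -> V) (rel : E -> E -> bool).
(* rel a b  <=>  the length-2 path "a then b" (t a = s b) is a generator of I. *)

Definition arrow_path (p : seq E) : bool :=
  if p is a :: q then path (fun a b => t a == s b) a q else true.
Definition rel_free (p : seq E) : bool :=
  if p is a :: q then path (fun a b => ~~ rel a b) a q else true.

Definition gentle : Prop :=
  (forall a b, rel a b -> t a = s b) /\
  (forall v, #|[pred a | s a == v]| <= 2) /\
  (forall v, #|[pred a | t a == v]| <= 2) /\
  (forall a, #|[pred b | (t a == s b) && rel a b]| <= 1) /\
  (forall a, #|[pred b | (t a == s b) && ~~ rel a b]| <= 1) /\
  (forall a, #|[pred c | (t c == s a) && rel c a]| <= 1) /\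
  (forall a, #|[pred c | (t c == s a) && ~~ rel c a]| <= 1) /\
  (* finite dimensionality (admissibility): paths avoiding I have bounded length *)
  (exists N, forall p, arrow_path p -> rel_free p -> size p <= N).

(* Letters: (a, true) is the direct letter a, (a, false) its formal inverse. *)
Definition letter := (E * bool)%type.
Definition lstart (x : letter) : V := if x.2 then s x.1 else t x.1.
Definition lend (x : letter) : V := if x.2 then t x.1 else s x.1.
Definition linv (x : letter) : letter := (x.1, ~~ x.2).

Definition string_step (x y : letter) : bool :=
  [&& lend x == lstart y,
      ~~ ((x.1 == y.1) && (x.2 != y.2)),            (* reduced *)
      ~~ [&& x.2, y.2 & rel x.1 y.1] &
      ~~ [&& ~~ x.2, ~~ y.2 & rel y.1 x.1]].        (* avoids inverse relations *)

Definition is_string_word (w : seq letter) : bool :=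
  if w is x :: w' then path string_step x w' else true.

Definition is_band (B : seq letter) : Prop :=
  if B is x :: B' then
    lend (last x B') = lstart x /\
    forall n, 0 < n -> is_string_word (flatten (nseq n B))
  else False.

(* Walks: start vertex together with the word (needed for length 0). *)
Definition walk := (V * seq letter)%type.
Definition wend (w : walk) : V := last w.1 (map lend w.2).
Definition winv (w : walk) : walk := (wend w, rev (map linv w.2)).

Definition window (B : seq letter) (i n : nat) : seq letter :=
  take n (drop i (flatten (nseq (i + n) B))).

Definition on_top (B : seq letter) (i : nat) (L : walk) : Prop :=
  exists y z, window B i (size L.2 + 2) = y :: rcons L.2 z /\
    y.2 = false /\ z.2 = true /\ L.1 = lend y.

Definition at_bottom (B : seq letter) (i : nat) (L : walk) : Prop :=
  exists y z, window B i (size L.2 + 2) = y :: rcons L.2 z /\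
    y.2 = true /\ z.2 = false /\ L.1 = lend y.

End Gentle.

From mathcomp Require Import all_boot.
From mathcomp Require Import zify.

Set Implicit Arguments.
Unset Strict Implicit.
Unset Printing Implicit Defensive.

(* Frame L by its
   neighbours in B^oo: W = y L z.  If l(L) >= l(B) - 1, then W is longer than
   one period, so its end letters reappear one period away.  For
   l(L) = l(B) - 1 this gives y = z, although y is inverse and z direct.  For
   l(L) >= l(B) the letter y before L is read off L itself; hence L' = L makes
   the inverse letter before L on top equal to the direct letter before L' at
   the bottom, and L' = L^-1 makes the direct letter before L' at the bottom
   the inverse of the direct letter after L on top. *)

Definition periodic (T : Type) (m : nat) (W : seq T) : Prop :=
  forall x0 k, k + m < size W -> nth x0 W (k + m) = nth x0 W k.

Lemma nth_flatten_nseq (T : Type) (x0 : T) (B : seq T) N p :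
  p < N * size B -> nth x0 (flatten (nseq N B)) p = nth x0 B (p %% size B).
Proof.
elim: N p => [|N IH] p //=; rewrite mulSn nth_cat => ltpNB.
case: ltnP => leBp; first by rewrite modn_small.
by rewrite IH ?(ltn_subLR _ leBp) // -{2}(subnK leBp) modnDr.
Qed.

Lemma nth_window (E : finType) (x0 : letter E) (B : seq (letter E)) i n k :
  0 < size B -> k < n -> nth x0 (window B i n) k = nth x0 B ((i + k) %% size B).
Proof.
move=> B_gt0 ltkn; rewrite /window nth_take // nth_drop nth_flatten_nseq //.
have : i + n <= (i + n) * size B by rewrite leq_pmulr.
lia.
Qed.

Lemma size_window (E : finType) (B : seq (letter E)) i n :
  0 < size B -> size (window B i n) = n.
Proof.
move=> B_gt0; rewrite size_take size_drop size_flatten /shape map_nseq sumn_nseq.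
have : i + n <= (i + n) * size B by rewrite leq_pmulr.
by case: ltnP => //; lia.
Qed.

Lemma window_periodic (E : finType) (B : seq (letter E)) i n :
  0 < size B -> periodic (size B) (window B i n).
Proof.
move=> B_gt0 x0 k; rewrite size_window // => ltkBn.
by rewrite !nth_window ?addnA ?modnDr //; lia.
Qed.

Section FramedPeriodicWord.
Variables (T : Type) (x0 y z : T) (w : seq T) (m : nat).
Hypothesis yz_periodic : periodic m (y :: rcons w z).

Lemma periodic_frame_ends_eq : (size w).+1 = m -> y = z.
Proof.
move=> Em; have := @yz_periodic x0 0.
by rewrite add0n -Em /= size_rcons ltnSn nth_rcons ltnn eqxx => /(_ isT).
Qed.

Lemma periodic_frame_head : 0 < m <= size w -> y = nth x0 w m.-1.
Proof.
case/andP=> m_gt0 lemw; have := @yz_periodic x0 0.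
rewrite add0n -(prednK m_gt0) /= size_rcons nth_rcons (prednK m_gt0) lemw.
by move/(_ (leqW lemw))->.
Qed.

Lemma periodic_frame_last : 0 < m <= size w -> z = nth x0 w (size w - m).
Proof.
case/andP=> m_gt0 lemw; have := @yz_periodic x0 (size w - m).+1.
rewrite addSn subnK //= size_rcons ltnSn nth_rcons ltnn eqxx.
by move/(_ isT)->; rewrite nth_rcons ltn_subrL m_gt0 (leq_trans m_gt0 lemw).
Qed.
End FramedPeriodicWord.

Lemma nth_rev_map_linv (E : finType) (x0 : letter E) (w : seq (letter E)) k :
  k < size w ->
  nth x0 (rev (map (@linv E) w)) k = linv (nth x0 w (size w - k.+1)).
Proof. by move=> ltkw; rewrite nth_rev size_map ?(nth_map x0) //; lia. Qed.

Theorem mainTheorem6 (V E : finType) (s t : E -> V) (rel : E -> E -> bool)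
  (Hgentle : gentle s t rel)
  (B : seq (letter E)) (HB : is_band s t rel B)
  (L L' : walk V E) (i j : nat)
  (Htop : on_top s t B i L) (Hbot : at_bottom s t B j L')
  (Heq : L' = L \/ L' = winv s t L) :
  size L.2 + 2 <= size B.
Proof.
have B_gt0 : 0 < size B by case: B HB Htop Hbot.
case: Htop Hbot => [y [z [Wtop [y_inv [z_dir _]]]]] [y' [z' [Wbot [y'_dir _]]]].
have sizeL' : size L'.2 = size L.2.
  by case: Heq => ->; rewrite ?size_rev ?size_map.
have top_per : periodic (size B) (y :: rcons L.2 z).
  by rewrite -Wtop; apply: window_periodic.
have bot_per : periodic (size B) (y' :: rcons L'.2 z').
  by rewrite -Wbot; apply: window_periodic.
rewrite leqNgt; apply/negP => long_L.
have [leBL | ltLB] := leqP (size B) (size L.2); last first.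
  have Eyz : y = z by apply: (periodic_frame_ends_eq y top_per); lia.
  by rewrite Eyz z_dir in y_inv.
have period_in_L : 0 < size B <= size L.2 by rewrite B_gt0.
have before_L' : y' = nth y L'.2 (size B).-1.
  by apply: (periodic_frame_head y bot_per); rewrite sizeL'.
case: Heq => EL'.
  have Eyy' : y = y'.
    by rewrite before_L' EL'; apply: (periodic_frame_head y top_per).
  by rewrite Eyy' y'_dir in y_inv.
have Ey'z : y' = linv z.
  rewrite before_L' EL' nth_rev_map_linv /=; last lia.
  by rewrite prednK // -(periodic_frame_last y top_per).
by rewrite Ey'z /linv /= z_dir in y'_dir.
Qed.
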